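(* Assume $\mathcal E$ is stable under pullback and $\mathcal F\subseteq\mathcal E$, and let $s$ be the discrete closure operator on $\mathcal A$, $s_A(m)=m$ for all $A\in\mathcal A$, $m\in\operatorname{sub}_{\mathcal A}A$. Let $X\in\mathcal X$ be such that $R$ preserves products with $X$ (i.e. $\rho_{X\times Y}=\rho_X\times\rho_Y$ for every $Y\in\mathcal X$). Then $X$ is $s^\rho$-compact if and only if $\rho_X\in\mathcal E$.
   Context: Standing setting. $\mathcal X$ and $\mathcal A$ are finitely complete categories; $\mathcal X$ carries a proper factorization system $(\mathcal E,\mathcal M)$ and $\mathcal A$ a proper factorization system $(\mathcal F,\mathcal N)$ (proper: every member of $\mathcal E$, resp. $\mathcal F$, is an epimorphism and every member of $\mathcal M$, resp. $\mathcal N$, is a monomorphism). $\mathcal A$ is a full reflective subcategory of $\mathcal X$ with reflector $R:\mathcal X\to\mathcal A$ and reflection (unit) $\rho_X:X\to RX$; as in the paper's setting, $\mathcal N\subseteq\mathcal M$ and $R\mathcal E\subseteq\mathcal F$. For $X\in\mathcal X$, $\operatorname{sub}X$ is the class $\mathcal M/X$ of $\mathcal M$-morphisms with codomain $X$, preordered by $m\le n$ iff $m=nj$ for some morphism $j$; for $A\in\mathcal A$, $\operatorname{sub}_{\mathcal A}A=\mathcal N/A$ with the same preorder. For $f:X\to Y$ and $m\in\operatorname{sub}X$, the image $f(m)\in\operatorname{sub}Y$ is the $\mathcal M$-part of the $(\mathcal E,\mathcal M)$-factorization of $fm$, and for $n\in\operatorname{sub}Y$ the preimage $f^{-1}(n)\in\operatorname{sub}X$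 is the pullback of $n$ along $f$ (analogously in $\mathcal A$ using $(\mathcal F,\mathcal N)$). A closure operator $c$ on $\mathcal A$ (with respect to $\mathcal N$) is a family of maps $c_A:\operatorname{sub}_{\mathcal A}A\to\operatorname{sub}_{\mathcal A}A$ ($A\in\mathcal A$) such that $m\le c_A(m)$, $m\le n\Rightarrow c_A(m)\le c_A(n)$, and $f(c_A(m))\le c_B(f(m))$ for every morphism $f:A\to B$ of $\mathcal A$; closure operators on $\mathcal X$ (with respect to $\mathcal M$) are defined likewise. For an arbitrary morphism $g:M\to A$ of $\mathcal A$, write $g(1_M)$ for the $\mathcal N$-part of its $(\mathcal F,\mathcal N)$-factorization and put $c_A(g):=c_A(g(1_M))$. The $R$-initial lift of $c$ is the closure operator $c^\rho$ on $\mathcal X$ given by $c^\rho_X(m)=\rho_X^{-1}(c_{RX}(Rm))$ for $X\in\mathcal X$, $m\in\operatorname{sub}X$. For a closure operator $d$ on a category, an object $X$ is $d$-compact if for every object $Y$ the projection $\pi_Y:X\times Y\to Y$ is $d$-preserving, i.e. $\pi_Y(d_{X\times Y}(m))=d_Y(\pi_Y(m))$ for every subobject $m$ of $X\times Y$. *)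

From Stdlib Require Import Setoid.
Set Implicit Arguments.
Unset Strict Implicit.

Record Cat := {
  Ob :> Type;
  Hom : Ob -> Ob -> Type;
  comp : forall A B D, Hom B D -> Hom A B -> Hom A D;
  idm : forall A, Hom A A;
  comp_assoc : forall A B D E (h : Hom D E) (g : Hom B D) (f : Hom A B),
      comp h (comp g f) = comp (comp h g) f;
  comp_id_l : forall A B (f : Hom A B), comp (idm B) f = f;
  comp_id_r : forall A B (f : Hom A B), comp f (idm A) = f }.
Arguments Hom {c}.
Arguments comp {c A B D}.
Arguments idm {c}.
Notation "g ⊚ f" := (comp g f) (at level 40, left associativity).

Section Basic.
Variable C : Cat.
Definition is_iso (A B : C) (f : Hom A B) : Prop :=
  exists g : Hom B A, g ⊚ f = idm A /\ f ⊚ g = idm B.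
Definition mono (A B : C) (f : Hom A B) : Prop :=
  forall Z (u v : Hom Z A), f ⊚ u = f ⊚ v -> u = v.
Definition epi (A B : C) (f : Hom A B) : Prop :=
  forall Z (u v : Hom B Z), u ⊚ f = v ⊚ f -> u = v.
Definition is_terminal (T : C) : Prop :=
  forall A : C, exists t : Hom A T, forall t' : Hom A T, t' = t.
Definition is_product (A B P : C) (p1 : Hom P A) (p2 : Hom P B) : Prop :=
  forall Z (f : Hom Z A) (g : Hom Z B), exists! h : Hom Z P, p1 ⊚ h = f /\ p2 ⊚ h = g.
Definition is_pullback (A B D P : C) (f : Hom A D) (g : Hom B D)
    (p : Hom P A) (q : Hom P B) : Prop :=
  f ⊚ p = g ⊚ q /\
  forall Z (u : Hom Z A) (v : Hom Z B), f ⊚ u = g ⊚ v ->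
    exists! h : Hom Z P, p ⊚ h = u /\ q ⊚ h = v.
Definition finitely_complete : Prop :=
  (exists T : C, is_terminal T) /\
  forall (A B D : C) (f : Hom A D) (g : Hom B D),
    exists (P : C) (p : Hom P A) (q : Hom P B), is_pullback f g p q.
End Basic.

Record FinLim (C : Cat) := {
  term : C;
  term_ok : is_terminal term;
  prod : C -> C -> C;
  pr1 : forall A B, Hom (prod A B) A;
  pr2 : forall A B, Hom (prod A B) B;
  prod_ok : forall A B, is_product (pr1 A B) (pr2 A B);
  pb : forall A B D (f : Hom A D) (g : Hom B D), C;
  pb1 : forall A B D (f : Hom A D) (g : Hom B D), Hom (pb f g) A;
  pb2 : forall A B D (f : Hom A D) (g : Hom B D), Hom (pb f g) B;
  pb_ok : forall A B D (f : Hom A D) (g : Hom B D), is_pullback f g (pb1 f g) (pb2 f g) }.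
Arguments prod {C} f0 _ _.
Arguments pr1 {C} f0 A B.
Arguments pr2 {C} f0 A B.
Arguments pb {C} f0 {A B D}.
Arguments pb1 {C} f0 {A B D}.
Arguments pb2 {C} f0 {A B D}.

Record FactSys (C : Cat) := {
  fE : forall A B : C, Hom A B -> Prop;
  fM : forall A B : C, Hom A B -> Prop;
  fmid : forall A B : C, Hom A B -> C;
  fe : forall A B (f : Hom A B), Hom A (fmid f);
  fm : forall A B (f : Hom A B), Hom (fmid f) B;
  fact_eq : forall A B (f : Hom A B), fm f ⊚ fe f = f;
  fe_E : forall A B (f : Hom A B), fE (fe f);
  fm_M : forall A B (f : Hom A B), fM (fm f);
  E_iso_l : forall A B B' (e : Hom A B) (h : Hom B B'), fE e -> is_iso h -> fE (h ⊚ e);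
  E_iso_r : forall A' A B (h : Hom A' A) (e : Hom A B), fE e -> is_iso h -> fE (e ⊚ h);
  M_iso_l : forall A B B' (m : Hom A B) (h : Hom B B'), fM m -> is_iso h -> fM (h ⊚ m);
  M_iso_r : forall A' A B (h : Hom A' A) (m : Hom A B), fM m -> is_iso h -> fM (m ⊚ h);
  diag : forall A B D E (e : Hom A B) (m : Hom D E) (u : Hom A D) (v : Hom B E),
      fE e -> fM m -> v ⊚ e = m ⊚ u ->
      exists! d : Hom B D, d ⊚ e = u /\ m ⊚ d = v }.
Arguments fE {C} f0 {A B}.
Arguments fM {C} f0 {A B}.
Arguments fmid {C} f0 {A B}.
Arguments fe {C} f0 {A B}.
Arguments fm {C} f0 {A B}.
Arguments fm_M {C} f0 {A B}.

Definition proper (C : Cat) (F : FactSys C) : Prop :=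
  (forall (A B : C) (e : Hom A B), fE F e -> epi e) /\
  (forall (A B : C) (m : Hom A B), fM F m -> mono m).

Definition pullback_stable_E (C : Cat) (F : FactSys C) : Prop :=
  forall (A B D P : C) (f : Hom A D) (g : Hom B D) (p : Hom P A) (q : Hom P B),
    is_pullback f g p q -> fE F g -> fE F p.

Section Sub.
Variables (C : Cat) (L : FinLim C) (F : FactSys C).

Definition sub (X : C) : Type := { M : C & { m : Hom M X | fM F m } }.
Definition sdom (X : C) (m : sub X) : C := projT1 m.
Definition sarr (X : C) (m : sub X) : Hom (sdom m) X := proj1_sig (projT2 m).
Definition sle (X : C) (m n : sub X) : Prop := exists j : Hom (sdom m) (sdom n), sarr m = sarr n ⊚ j.
Definition sequiv (X : C) (m n : sub X) : Prop := sle m n /\ sle n m.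

Definition image (X Y : C) (f : Hom X Y) (m : sub X) : sub Y :=
  existT _ (fmid F (f ⊚ sarr m)) (exist _ (fm F (f ⊚ sarr m)) (fm_M F _)).

Lemma pb_M (A B D : C) (f : Hom A D) (n : Hom B D) : fM F n -> fM F (pb1 L f n).
Proof.
  intro Hn.
  destruct (pb_ok L f n) as [Hsq Hu].
  set (p := pb1 L f n) in *. set (q := pb2 L f n) in *.
  pose proof (fact_eq F p) as Hf.
  set (e := fe F p) in *. set (m := fm F p) in *.
  assert (Hsq2 : (f ⊚ m) ⊚ e = n ⊚ q) by (rewrite <- comp_assoc, Hf; exact Hsq).
  destruct (diag (fe_E F p) Hn Hsq2) as [d [[Hd1 Hd2] _]].
  destruct (Hu _ m d (eq_sym Hd2)) as [k [[Hk1 Hk2] _]].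
  assert (Hke : k ⊚ e = idm _).
  { destruct (Hu _ p q Hsq) as [h [_ Hh]].
    rewrite <- (Hh (k ⊚ e)), <- (Hh (idm _)); auto.
    - split; apply comp_id_r.
    - split; rewrite comp_assoc; [rewrite Hk1; exact Hf | rewrite Hk2; exact Hd1]. }
  assert (Hek : e ⊚ k = idm _).
  { destruct (diag (fe_E F p) (fm_M F p) (eq_refl (m ⊚ e))) as [h [_ Hh]].
    rewrite <- (Hh (e ⊚ k)), <- (Hh (idm _)); auto.
    - split; [apply comp_id_l | apply comp_id_r].
    - split.
      + fold e. rewrite <- comp_assoc, Hke. apply comp_id_r.
      + fold m e. rewrite comp_assoc, Hf. exact Hk1. }
  rewrite <- Hf. apply M_iso_r; [apply fm_M | exists k; auto].
Qed.

Definition preimage (X Y : C) (f : Hom X Y) (n : sub Y) : sub X :=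
  existT _ (pb L f (sarr n)) (exist _ (pb1 L f (sarr n)) (pb_M f (proj2_sig (projT2 n)))).

Definition ClOp : Type := forall X : C, sub X -> sub X.
Definition is_closure_operator (c : ClOp) : Prop :=
  (forall X (m : sub X), sle m (c X m)) /\
  (forall X (m n : sub X), sle m n -> sle (c X m) (c X n)) /\
  (forall X Y (f : Hom X Y) (m : sub X), sle (image f (c X m)) (c Y (image f m))).

Definition preserving (d : ClOp) (X Y : C) (f : Hom X Y) : Prop :=
  forall m : sub X, sequiv (image f (d X m)) (d Y (image f m)).
Definition compact (d : ClOp) (X : C) : Prop :=
  forall Y : C, preserving d (pr2 L X Y).
End Sub.
Arguments sub {C} F X.
Arguments image {C} F {X Y} f m.
Arguments preimage {C} L F {X Y} f n.
Arguments compact {C} L F d X.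

Section FullSub.
Variables (C : Cat) (P : C -> Prop).
Definition FullSub : Cat.
Proof.
  refine {| Ob := { x : C | P x };
            Hom := fun a b => Hom (proj1_sig a) (proj1_sig b);
            comp := fun a b d g f => g ⊚ f;
            idm := fun a => idm (proj1_sig a) |}.
  - intros; apply comp_assoc.
  - intros; apply comp_id_l.
  - intros; apply comp_id_r.
Defined.
End FullSub.

Record Reflection (C : Cat) (P : C -> Prop) := {
  rO : C -> FullSub P;
  rho : forall X : C, Hom X (proj1_sig (rO X));
  rext : forall (X : C) (A : FullSub P), Hom X (proj1_sig A) -> @Hom (FullSub P) (rO X) A;
  rext_eq : forall X A (f : Hom X (proj1_sig A)), (rext f : @Hom C _ _) ⊚ rho X = f;
  rext_uniq : forall X A (f : Hom X (proj1_sig A)) (g : @Hom (FullSub P) (rO X) A),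
      (g : @Hom C _ _) ⊚ rho X = f -> g = rext f }.
Arguments rO {C P} r X.
Arguments rho {C P} r X.
Arguments rext {C P} r {X A} f.

Definition Rmor (C : Cat) (P : C -> Prop) (R : Reflection P) (X Y : C) (f : Hom X Y)
  : @Hom (FullSub P) (rO R X) (rO R Y) := rext R (rho R Y ⊚ f).
Arguments Rmor {C P} R {X Y} f.

(* R preserves products with X: (R(X x Y), R pi_X, R pi_Y) is a product of RX and RY,
   i.e. the comparison R(X x Y) -> RX x RY is invertible, i.e. rho_{XxY} = rho_X x rho_Y *)
Definition preserves_products_with (C : Cat) (L : FinLim C) (P : C -> Prop)
    (R : Reflection P) (X : C) : Prop :=
  forall Y : C, is_product (A := proj1_sig (rO R X)) (B := proj1_sig (rO R Y))
                  (Rmor R (pr1 L X Y) : @Hom C _ _) (Rmor R (pr2 L X Y) : @Hom C _ _).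

Section Lift.
Variables (C : Cat) (L : FinLim C) (FX : FactSys C) (P : C -> Prop)
  (R : Reflection P) (FA : FactSys (FullSub P))
  (NM : forall (A B : FullSub P) (f : @Hom (FullSub P) A B), fM FA f -> fM FX (f : @Hom C _ _)).

Definition img1 (M A : FullSub P) (g : @Hom (FullSub P) M A) : sub FA A :=
  existT _ (fmid FA g) (exist _ (fm FA g) (fm_M FA g)).

Definition incl (A : FullSub P) (n : sub FA A) : sub FX (proj1_sig A) :=
  existT _ (proj1_sig (projT1 n))
    (exist _ (proj1_sig (projT2 n) : @Hom C _ _) (NM (proj2_sig (projT2 n)))).

Definition discrete : ClOp FA := fun A m => m.

(* R-initial lift: c^rho_X(m) = rho_X^{-1}(c_{RX}(Rm)) *)
Definition initial_lift (c : ClOp FA) : ClOp FX :=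
  fun X m => preimage L FX (rho R X) (incl (c (rO R X) (img1 (Rmor R (sarr m))))).
End Lift.
Arguments initial_lift {C} L FX {P} R FA NM c _ _.
Arguments discrete {C P} FA _ _.


(* Write s for the R-initial lift of the discrete closure operator: s(m) is the pullback along
   rho of the image of R m.  If X is s-compact, test compactness against Y = RX on the graph G
   of rho_X.  Maps into an object of A that agree on a subobject agree on its s-closure, so s(G)
   stays inside the graph and its projection lies in the image of rho_X.  The projection of G
   itself is rho_X up to an E-map, so R of its image still factors rho_(RX) = R rho_X, and its
   closure is all of RX.  Compactness then makes the image of rho_X split epi: rho_X is in E.
   Conversely, the image of a closure always lies in the closure of the image.  For the reverse
   inclusion along pi_Y, cover a generalized element of s(pi_Y(m)) by pulling back the E-maps
   R(pi_Y)(Rm) -> R(pi_Y(m)) and rho_X; pairing yields an element of X x Y whose rho lies in Rm,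
   because rho_(X x Y) = rho_X x rho_Y, so the cover lands in s(m). *)

Set Implicit Arguments.
Unset Strict Implicit.

Section ProperFactorization.
Variables (C : Cat) (F : FactSys C).
Hypothesis properF : proper F.

Lemma M_split_iso (A B : C) (m : Hom A B) (d : Hom B A) :
  fM F m -> m ⊚ d = idm B -> is_iso m.
Proof.
  intros Hm Hd. exists d. split; [|exact Hd].
  apply (proj2 properF _ _ m Hm).
  rewrite comp_assoc, Hd, comp_id_l, comp_id_r. reflexivity.
Qed.

Lemma E_of_split_M_part (A B : C) (g : Hom A B) (d : Hom B (fmid F g)) :
  fm F g ⊚ d = idm B -> fE F g.
Proof.
  intro Hd. rewrite <- (fact_eq F g).
  apply E_iso_l; [apply fe_E | exact (M_split_iso (fm_M F g) Hd)].
Qed.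

Lemma E_comp (A B D : C) (e1 : Hom A B) (e2 : Hom B D) :
  fE F e1 -> fE F e2 -> fE F (e2 ⊚ e1).
Proof.
  intros H1 H2.
  assert (Hs1 : e2 ⊚ e1 = fm F (e2 ⊚ e1) ⊚ fe F (e2 ⊚ e1)) by (rewrite fact_eq; reflexivity).
  destruct (diag H1 (fm_M F _) Hs1) as [d1 [[_ Hd1] _]].
  assert (Hs2 : idm D ⊚ e2 = fm F (e2 ⊚ e1) ⊚ d1) by (rewrite comp_id_l; auto).
  destruct (diag H2 (fm_M F _) Hs2) as [d2 [[_ Hd2] _]].
  exact (E_of_split_M_part Hd2).
Qed.

Lemma E_cancel_r (A B D : C) (f : Hom A B) (g : Hom B D) :
  fE F (g ⊚ f) -> fE F g.
Proof.
  intro H.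
  assert (Hs : idm D ⊚ (g ⊚ f) = fm F g ⊚ (fe F g ⊚ f))
    by (rewrite comp_id_l, comp_assoc, fact_eq; reflexivity).
  destruct (diag H (fm_M F g) Hs) as [d [[_ Hd] _]].
  exact (E_of_split_M_part Hd).
Qed.
End ProperFactorization.

Section Subobjects.
Variables (C : Cat) (F : FactSys C).

Definition mimage (A B : C) (f : Hom A B) : sub F B :=
  existT _ (fmid F f) (exist _ (fm F f) (fm_M F f)).

Lemma sle_trans (X : C) (m n k : sub F X) : sle m n -> sle n k -> sle m k.
Proof.
  intros [j Hj] [i Hi]. exists (i ⊚ j). rewrite Hj, Hi, comp_assoc. reflexivity.
Qed.

Lemma sle_of_E_cover (X Z : C) (m n : sub F X) (e : Hom Z (sdom m)) (u : Hom Z (sdom n)) :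
  fE F e -> sarr m ⊚ e = sarr n ⊚ u -> sle m n.
Proof.
  intros He Hsq.
  destruct (diag He (proj2_sig (projT2 n)) Hsq) as [d [[_ Hd] _]].
  exists d. symmetry. exact Hd.
Qed.

Lemma image_le (X Y : C) (f : Hom X Y) (m : sub F X) (n : sub F Y) (u : Hom (sdom m) (sdom n)) :
  f ⊚ sarr m = sarr n ⊚ u -> sle (image F f m) n.
Proof.
  intro Hf.
  apply (sle_of_E_cover (m := image F f m) (e := fe F (f ⊚ sarr m)) (u := u)); [apply fe_E|].
  exact (eq_trans (fact_eq F _) Hf).
Qed.
End Subobjects.
Arguments mimage {C} F {A B} f.

Lemma fact_eq_full (C : Cat) (P : C -> Prop) (FA : FactSys (FullSub P))
    (A B : FullSub P) (f : @Hom (FullSub P) A B) :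
  (fm FA f : @Hom C _ _) ⊚ (fe FA f : @Hom C _ _) = (f : @Hom C _ _).
Proof. exact (fact_eq FA f). Qed.

Section Reflection.
Variables (C : Cat) (L : FinLim C) (P : C -> Prop) (R : Reflection P).

Local Notation Rm f := (Rmor R f : @Hom C _ _).

Lemma Rmor_natural (X Y : C) (f : Hom X Y) : Rm f ⊚ rho R X = rho R Y ⊚ f.
Proof. apply rext_eq. Qed.

Lemma rho_epi_into_sub (X : C) (A : FullSub P) (u v : Hom (proj1_sig (rO R X)) (proj1_sig A)) :
  u ⊚ rho R X = v ⊚ rho R X -> u = v.
Proof.
  intro H. transitivity (rext R (v ⊚ rho R X) : @Hom C _ _).
  - exact (@rext_uniq C P R X A _ u H).
  - symmetry. exact (@rext_uniq C P R X A _ v eq_refl).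
Qed.

Lemma Rmor_comp (X Y Z : C) (f : Hom X Y) (g : Hom Y Z) : Rm (g ⊚ f) = Rm g ⊚ Rm f.
Proof.
  apply rho_epi_into_sub.
  rewrite Rmor_natural, <- comp_assoc, Rmor_natural, !comp_assoc, Rmor_natural. reflexivity.
Qed.

Lemma Rmor_rho (X : C) : Rm (rho R X) = rho R (proj1_sig (rO R X)).
Proof. apply rho_epi_into_sub. apply Rmor_natural. Qed.

Lemma rho_prod_unique (X Y W : C) (z : Hom W (prod L X Y))
    (u : Hom W (proj1_sig (rO R (prod L X Y)))) :
  preserves_products_with L R X ->
  Rm (pr1 L X Y) ⊚ u = rho R X ⊚ (pr1 L X Y ⊚ z) ->
  Rm (pr2 L X Y) ⊚ u = rho R Y ⊚ (pr2 L X Y ⊚ z) ->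
  rho R (prod L X Y) ⊚ z = u.
Proof.
  intros Hpres H1 H2.
  destruct (Hpres Y W (rho R X ⊚ (pr1 L X Y ⊚ z)) (rho R Y ⊚ (pr2 L X Y ⊚ z)))
    as [h [_ Hh]].
  transitivity h; [symmetry|]; apply Hh; split; try assumption;
    rewrite comp_assoc, Rmor_natural, comp_assoc; reflexivity.
Qed.
End Reflection.

Section DiscreteLift.
Variables (C : Cat) (L : FinLim C) (F : FactSys C) (P : C -> Prop) (R : Reflection P)
  (FA : FactSys (FullSub P))
  (NM : forall (A B : FullSub P) (f : @Hom (FullSub P) A B), fM FA f -> fM F (f : @Hom C _ _)).
Hypotheses (properF : proper F) (properA : proper FA).
Hypothesis RE : forall (A B : C) (g : Hom A B), fE F g -> fE FA (Rmor R g).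
Hypothesis FE :
  forall (A B : FullSub P) (g : @Hom (FullSub P) A B), fE FA g -> fE F (g : @Hom C _ _).
Hypothesis Estab : pullback_stable_E F.

Local Notation Rm f := (Rmor R f : @Hom C _ _).
(* [Nm f] is the paper's (R f)(1): the N-part of R f, read in the ambient category. *)
Local Notation Nm f := (fm FA (Rmor R f) : @Hom C _ _).
Local Notation Fe f := (fe FA (Rmor R f) : @Hom C _ _).
Local Notation srho := (initial_lift L F R FA NM (discrete FA)).

Lemma srho_square (X : C) (m : sub F X) :
  rho R X ⊚ sarr (srho X m) = Nm (sarr m) ⊚ pb2 L (rho R X) (Nm (sarr m)).
Proof. exact (proj1 (pb_ok L _ _)). Qed.

Lemma srho_factor (X Z : C) (m : sub F X) (g : Hom Z X)
    (v : Hom Z (proj1_sig (fmid FA (Rmor R (sarr m))))) :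
  rho R X ⊚ g = Nm (sarr m) ⊚ v -> exists u, g = sarr (srho X m) ⊚ u.
Proof.
  intro Hg. destruct (proj2 (pb_ok L _ _) _ _ _ Hg) as [u [[Hu _] _]].
  exists u. symmetry. exact Hu.
Qed.

Lemma srho_equalizer (X : C) (A : FullSub P) (u v : Hom X (proj1_sig A)) (m : sub F X) :
  u ⊚ sarr m = v ⊚ sarr m -> u ⊚ sarr (srho X m) = v ⊚ sarr (srho X m).
Proof.
  intro Huv.
  set (u' := (rext R u : @Hom C _ _)). set (v' := (rext R v : @Hom C _ _)).
  assert (HR : u' ⊚ Rm (sarr m) = v' ⊚ Rm (sarr m)).
  { apply rho_epi_into_sub.
    rewrite <- !comp_assoc, !Rmor_natural, !comp_assoc. unfold u', v'. rewrite !rext_eq.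
    exact Huv. }
  assert (HN : u' ⊚ Nm (sarr m) = v' ⊚ Nm (sarr m)).
  { apply (proj1 properA _ _ _ (fe_E FA (Rmor R (sarr m))) A
      (u' ⊚ Nm (sarr m)) (v' ⊚ Nm (sarr m))).
    simpl. rewrite <- !comp_assoc, fact_eq_full. exact HR. }
  rewrite <- (rext_eq R u), <- (rext_eq R v). fold u' v'.
  rewrite <- !comp_assoc, srho_square, !comp_assoc, HN. reflexivity.
Qed.

Lemma Rimage_comparison (X Y : C) (f : Hom X Y) (m : sub F X) :
  exists d : Hom (proj1_sig (fmid FA (Rmor R (sarr m))))
                 (proj1_sig (fmid FA (Rmor R (fm F (f ⊚ sarr m))))),
    Nm (fm F (f ⊚ sarr m)) ⊚ d = Rm f ⊚ Nm (sarr m) /\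
    d ⊚ Fe (sarr m) = Fe (fm F (f ⊚ sarr m)) ⊚ Rm (fe F (f ⊚ sarr m)).
Proof.
  assert (Hsq : (Rm f ⊚ Nm (sarr m)) ⊚ Fe (sarr m)
              = Nm (fm F (f ⊚ sarr m)) ⊚ (Fe (fm F (f ⊚ sarr m)) ⊚ Rm (fe F (f ⊚ sarr m)))).
  { rewrite <- comp_assoc, fact_eq_full, comp_assoc, fact_eq_full, <- !Rmor_comp, fact_eq.
    reflexivity. }
  destruct (diag (fe_E FA (Rmor R (sarr m))) (fm_M FA (Rmor R (fm F (f ⊚ sarr m)))) Hsq)
    as [d [[Hd1 Hd2] _]].
  exists d. split; [exact Hd2 | exact Hd1].
Qed.

Lemma Rimage_comparison_E (X Y : C) (f : Hom X Y) (m : sub F X)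
    (d : Hom (proj1_sig (fmid FA (Rmor R (sarr m))))
             (proj1_sig (fmid FA (Rmor R (fm F (f ⊚ sarr m)))))) :
  d ⊚ Fe (sarr m) = Fe (fm F (f ⊚ sarr m)) ⊚ Rm (fe F (f ⊚ sarr m)) ->
  fE F d.
Proof.
  intro Hd. apply FE.
  apply (E_cancel_r properA (f := fe FA (Rmor R (sarr m)))).
  change (fE FA ((d : @Hom C _ _) ⊚ Fe (sarr m))). rewrite Hd.
  apply (E_comp properA (e1 := Rmor R (fe F (f ⊚ sarr m)))); [apply RE, fe_E | apply fe_E].
Qed.

Lemma srho_image_le (X Y : C) (f : Hom X Y) (m : sub F X) :
  sle (image F f (srho X m)) (srho Y (image F f m)).
Proof.
  destruct (Rimage_comparison f m) as [d [Hd _]].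
  assert (Hf : rho R Y ⊚ (f ⊚ sarr (srho X m))
             = Nm (fm F (f ⊚ sarr m)) ⊚ (d ⊚ pb2 L (rho R X) (Nm (sarr m)))).
  { rewrite comp_assoc, <- Rmor_natural, <- comp_assoc, srho_square.
    rewrite !comp_assoc, Hd. reflexivity. }
  destruct (srho_factor (m := image F f m) Hf) as [u Hu].
  exact (image_le Hu).
Qed.

Lemma srho_image_pr2_ge (X Y : C) (m : sub F (prod L X Y)) :
  preserves_products_with L R X -> fE F (rho R X) ->
  sle (srho Y (image F (pr2 L X Y) m)) (image F (pr2 L X Y) (srho (prod L X Y) m)).
Proof.
  intros Hpres HrX.
  destruct (Rimage_comparison (pr2 L X Y) m) as [d [Hd Hdfe]].
  pose proof (Rimage_comparison_E Hdfe) as HdE.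
  set (n := image F (pr2 L X Y) m).
  set (q1 := sarr (srho Y n)). set (q2 := pb2 L (rho R Y) (Nm (sarr n))).
  pose proof (srho_square n : rho R Y ⊚ q1 = Nm (sarr n) ⊚ q2) as Hq.
  set (r1 := pb1 L q2 d). set (r2 := pb2 L q2 d).
  assert (Hr : q2 ⊚ r1 = d ⊚ r2) by exact (proj1 (pb_ok L _ _)).
  pose proof (Estab (pb_ok L q2 d) HdE : fE F r1) as Hr1.
  set (a := Rm (pr1 L X Y) ⊚ (Nm (sarr m) ⊚ r2)).
  set (w1 := pb1 L a (rho R X)). set (w2 := pb2 L a (rho R X)).
  assert (Hw : a ⊚ w1 = rho R X ⊚ w2) by exact (proj1 (pb_ok L _ _)).
  pose proof (Estab (pb_ok L a (rho R X)) HrX : fE F w1) as Hw1.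
  destruct (prod_ok L w2 (q1 ⊚ (r1 ⊚ w1))) as [z [[Hz1 Hz2] _]].
  assert (Hz : rho R (prod L X Y) ⊚ z = Nm (sarr m) ⊚ (r2 ⊚ w1)).
  { apply rho_prod_unique; [exact Hpres | |].
    - rewrite Hz1, <- Hw. unfold a. rewrite <- !comp_assoc. reflexivity.
    - rewrite Hz2, (comp_assoc _ q1), Hq, <- comp_assoc, (comp_assoc q2), Hr.
      rewrite !comp_assoc, <- Hd. reflexivity. }
  destruct (srho_factor Hz) as [wz Hwz].
  apply (sle_of_E_cover (m := srho Y n)
           (n := image F (pr2 L X Y) (srho (prod L X Y) m)) (e := r1 ⊚ w1)
           (u := fe F (pr2 L X Y ⊚ sarr (srho (prod L X Y) m)) ⊚ wz)).
  - exact (E_comp properF Hw1 Hr1).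
  - change (q1 ⊚ (r1 ⊚ w1) = fm F (pr2 L X Y ⊚ sarr (srho (prod L X Y) m))
              ⊚ (fe F (pr2 L X Y ⊚ sarr (srho (prod L X Y) m)) ⊚ wz)).
    rewrite (comp_assoc (fm F _)), fact_eq, <- comp_assoc, <- Hwz. exact (eq_sym Hz2).
Qed.

Lemma srho_full_of_rho_factor (Y : C) (n : sub F Y)
    (k : Hom Y (proj1_sig (rO R (sdom n)))) :
  rho R Y = Rm (sarr n) ⊚ k -> exists h, sarr (srho Y n) ⊚ h = idm Y.
Proof.
  intro Hk.
  assert (Hsq : rho R Y ⊚ idm Y = Nm (sarr n) ⊚ (Fe (sarr n) ⊚ k))
    by (rewrite comp_id_r, comp_assoc, fact_eq_full; exact Hk).
  destruct (srho_factor Hsq) as [h Hh]. exists h. symmetry. exact Hh.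
Qed.

Lemma compact_rho_E (X : C) : compact L F srho X -> fE F (rho R X).
Proof.
  intro Hc.
  destruct (prod_ok L (idm X) (rho R X)) as [g [[Hg1 Hg2] _]].
  set (graph := mimage F g).
  assert (Hgraph : pr2 L _ _ ⊚ sarr graph = (rho R X ⊚ pr1 L _ _) ⊚ sarr graph).
  { apply (proj1 properF _ _ _ (fe_E F g)). simpl.
    rewrite <- !comp_assoc, fact_eq, Hg2, Hg1, comp_id_r. reflexivity. }
  pose proof (srho_equalizer (A := rO R X) Hgraph) as Hclosure.
  assert (Hle : sle (image F (pr2 L _ _) (srho _ graph)) (mimage F (rho R X))).
  { apply (image_le (m := srho _ graph) (n := mimage F (rho R X))
      (u := fe F (rho R X) ⊚ (pr1 L _ _ ⊚ sarr (srho _ graph)))).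
    rewrite Hclosure. change (sarr (mimage F (rho R X))) with (fm F (rho R X)).
    rewrite comp_assoc, fact_eq, comp_assoc. reflexivity. }
  assert (Hfull : exists h, sarr (srho _ (image F (pr2 L X _) graph)) ⊚ h = idm _).
  { apply (srho_full_of_rho_factor (n := image F (pr2 L X _) graph)
             (k := Rm (fe F (pr2 L X _ ⊚ fm F g)) ⊚ Rm (fe F g))).
    simpl. rewrite <- !Rmor_comp, comp_assoc, fact_eq, <- comp_assoc, fact_eq, Hg2.
    symmetry. apply Rmor_rho. }
  destruct Hfull as [h Hh].
  destruct (sle_trans (proj2 (Hc _ graph)) Hle) as [j Hj].
  apply (E_of_split_M_part properF (d := j ⊚ h)).
  change (sarr (mimage F (rho R X)) ⊚ (j ⊚ h) = idm _).
  rewrite comp_assoc, <- Hj. exact Hh.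
Qed.
End DiscreteLift.

Theorem corollary2p12
  (CX : Cat) (LX : FinLim CX) (FX : FactSys CX)
  (P : CX -> Prop) (R : Reflection P) (FA : FactSys (FullSub P))
  (Afc : finitely_complete (FullSub P))
  (properX : proper FX) (properA : proper FA)
  (NM : forall (A B : FullSub P) (f : @Hom (FullSub P) A B), fM FA f -> fM FX (f : @Hom CX _ _))
  (RE : forall (A B : CX) (f : Hom A B), fE FX f -> fE FA (Rmor R f))
  (Estab : pullback_stable_E FX)
  (FE : forall (A B : FullSub P) (f : @Hom (FullSub P) A B), fE FA f -> fE FX (f : @Hom CX _ _))
  (X : CX) (Hpres : preserves_products_with LX R X) :
  compact LX FX (initial_lift LX FX R FA NM (discrete FA)) X <-> fE FX (rho R X).
Proof.
  split.
  - exact (compact_rho_E properX properA (X := X)).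
  - intros HrX Y m. split.
    + apply srho_image_le.
    + exact (srho_image_pr2_ge NM properX properA RE FE Estab m Hpres HrX).
Qed.
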